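(* Let $E_1^S,\dots,E_{d_S}^S\ge 0$ be real numbers, $E\in\mathbb{R}$, and let $s:\mathbb{R}\to\mathbb{R}$ be twice differentiable. Set $\beta=s'(E)$ and define probability vectors $$p_k=\frac{e^{s(E-E_k^S)}}{\sum_{l=1}^{d_S}e^{s(E-E_l^S)}},\qquad q_k=\frac{e^{-\beta E_k^S}}{\sum_{l=1}^{d_S}e^{-\beta E_l^S}} .$$ Let $$\gamma_{\max}=\max_k\sup_{\xi\in[E-E_k^S,E]}\tfrac12 s''(\xi)(E_k^S)^2,\qquad \gamma_{\min}=\min_k\inf_{\xi\in[E-E_k^S,E]}\tfrac12 s''(\xi)(E_k^S)^2,$$ assumed finite. Then for every $k$, $|p_k-q_k|\le q_k\left(e^{\gamma_{\max}-\gamma_{\min}}-1\right)$, and consequently $$\tfrac12\sum_{k=1}^{d_S}|p_k-q_k|\le \tfrac12\left(e^{\gamma_{\max}-\gamma_{\min}}-1\right).$$ In particular, if there are $\eta>0$ and an integer $m\ge1$ such that $-\frac{4}{\eta^2m}\le s''(\xi)\le 0$ for all $\xi\in[E-\max_kE_k^S,E]$, and $\max_k E_k^S\le h$, then $\tfrac12\sum_k|p_k-q_k|\le \tfrac12\left(e^{2h^2/(\eta^2 m)}-1\right)$.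
   Context: Here $e^{s}$ plays the role of a smooth approximation of the number of bath energy levels in an energy window, the $E_k^S$ are the eigenvalues of a system Hamiltonian $H_S$ (so $h$ can be taken to be $\|H_S\|_\infty$ when $H_S\ge0$), $(p_k)$ are the eigenvalues of the reduced microcanonical state of the uncoupled system-plus-bath, and $(q_k)$ are the eigenvalues of the Gibbs state $e^{-\beta H_S}/\operatorname{Tr}e^{-\beta H_S}$. *)

From Stdlib Require Import Reals.
Open Scope R_scope.

Fixpoint rsum (f : nat -> R) (n : nat) : R :=
  match n with
  | O => 0
  | S n' => rsum f n' + f n'
  end.

(* rmaxn f n = max(0, f 0, ..., f (n-1)); for nonnegative f and n >= 1
   this is max_k f k. *)
Fixpoint rmaxn (f : nat -> R) (n : nat) : R :=
  match n with
  | O => 0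
  | S n' => Rmax (rmaxn f n') (f n')
  end.

(* Energies are indexed by k = 0 .. dS-1. *)
Definition p_vec (s : R -> R) (E : R) (ES : nat -> R) (dS : nat) (k : nat) : R :=
  exp (s (E - ES k)) / rsum (fun l => exp (s (E - ES l))) dS.

Definition q_vec (beta : R) (ES : nat -> R) (dS : nat) (k : nat) : R :=
  exp (- beta * ES k) / rsum (fun l => exp (- beta * ES l)) dS.

(* The set { 1/2 s''(xi) (E_k^S)^2 | k < dS, xi in [E - E_k^S, E] }.
   max_k sup_xi  = sup of this set, min_k inf_xi = inf of this set. *)
Definition gamma_set (s2 : R -> R) (E : R) (ES : nat -> R) (dS : nat) (y : R) : Prop :=
  exists k xi, (k < dS)%nat /\ E - ES k <= xi <= E /\ y = / 2 * s2 xi * (ES k) ^ 2.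

Definition is_lower_bound (P : R -> Prop) (m : R) : Prop := forall x, P x -> m <= x.
Definition is_glb (P : R -> Prop) (m : R) : Prop :=
  is_lower_bound P m /\ (forall b, is_lower_bound P b -> b <= m).

From Stdlib Require Import Reals Lra Lia Psatz FunctionalExtensionality.
Open Scope R_scope.

(* Second-order Taylor expansion of [s] at [E] with Lagrange remainder gives
   [exp (s (E - E_k)) = exp (s E) * exp (- beta E_k) * exp gamma_k] with
   [gamma_k = 1/2 s''(xi_k) E_k^2] in [[gmin, gmax]].  So the unnormalised
   weights of [p] and [q] are proportional up to a factor in
   [[exp gmin, exp gmax]]; after normalisation [p_k / q_k] lies in
   [[exp (-(gmax - gmin)), exp (gmax - gmin)]], which bounds [|p_k - q_k|]
   by [q_k (exp (gmax - gmin) - 1)], and summing uses [sum_k q_k = 1].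
   The last claim takes [gmin = -2 h^2 / (eta^2 m)] and [gmax = 0]. *)

Lemma derivable_pt_lim_quadratic (a K y t : R) :
  derivable_pt_lim (fun t => a * t + K * (t - y) ^ 2) t (a + 2 * K * (t - y)).
Proof.
  assert (Hsq : derivable_pt_lim (fun t => (t - y) ^ 2) t (2 * (t - y))).
  { replace (fun t => (t - y) ^ 2) with (fun t => t ^ 2 - 2 * y * t + y ^ 2)
      by (apply functional_extensionality; intro; ring).
    replace (2 * (t - y)) with (INR 2 * t ^ Nat.pred 2 - 2 * y * 1 + 0) by (simpl; ring).
    apply (derivable_pt_lim_plus (fun t => t ^ 2 - 2 * y * t) (fct_cte (y ^ 2))).
    - apply derivable_pt_lim_minus; [apply derivable_pt_lim_pow|].
      apply derivable_pt_lim_scal, derivable_pt_lim_id.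
    - apply derivable_pt_lim_const. }
  replace (a + 2 * K * (t - y)) with (a * 1 + K * (2 * (t - y))) by ring.
  apply (derivable_pt_lim_plus (fun t => a * t) (fun t => K * (t - y) ^ 2)).
  - apply derivable_pt_lim_scal, derivable_pt_lim_id.
  - apply (derivable_pt_lim_scal (fun t => (t - y) ^ 2)), Hsq.
Qed.

Lemma taylor_lagrange2 (f f1 f2 : R -> R) (x y : R) :
  x <= y ->
  (forall t, x <= t <= y -> derivable_pt_lim f t (f1 t)) ->
  (forall t, x <= t <= y -> derivable_pt_lim f1 t (f2 t)) ->
  exists xi, x <= xi <= y /\ f x = f y + f1 y * (x - y) + / 2 * f2 xi * (x - y) ^ 2.
Proof.
  intros Hxy Hf Hf1.
  destruct (Req_dec x y) as [<-|Hne].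
  { exists x; split; [lra|ring]. }
  assert (Hlt : x < y) by lra.
  assert (Hd : (x - y) ^ 2 <> 0) by (apply pow_nonzero; lra).
  set (K := (f x - f y - f1 y * (x - y)) / (x - y) ^ 2).
  (* [g] is [f] minus its quadratic interpolant; [K] is chosen so that [g x = g y]. *)
  set (g := fun t => f t - (f1 y * t + K * (t - y) ^ 2)).
  assert (Hg : forall t, x <= t <= y ->
                 derivable_pt_lim g t (f1 t - (f1 y + 2 * K * (t - y)))).
  { intros t Ht. apply (derivable_pt_lim_minus f); [exact (Hf t Ht)|].
    apply derivable_pt_lim_quadratic. }
  destruct (MVT_cor2 g _ x y Hlt Hg) as [c [Hgc Hc]].
  assert (Hgxy : g y - g x = 0) by (unfold g, K; field; lra).
  assert (Hf1c : f1 y - f1 c = 2 * K * (y - c)).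
  { assert (Hgc0 : f1 c - (f1 y + 2 * K * (c - y)) = 0)
      by (apply (Rmult_eq_reg_r (y - x)); lra).
    lra. }
  destruct (MVT_cor2 f1 f2 c y (proj2 Hc) (fun t Ht => Hf1 t ltac:(lra)))
    as [xi [Hxi Hxi_in]].
  assert (HK : f2 xi = 2 * K) by (apply (Rmult_eq_reg_r (y - c)); lra).
  exists xi; split; [lra|].
  rewrite HK. unfold K. field. lra.
Qed.

Lemma rsum_le (f g : nat -> R) (n : nat) :
  (forall k, (k < n)%nat -> f k <= g k) -> rsum f n <= rsum g n.
Proof.
  induction n as [|n IH]; simpl; intros H; [lra|].
  assert (rsum f n <= rsum g n) by (apply IH; intros; apply H; lia).
  assert (f n <= g n) by (apply H; lia). lra.
Qed.

Lemma rsum_ext (f g : nat -> R) (n : nat) :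
  (forall k, f k = g k) -> rsum f n = rsum g n.
Proof. intros H; induction n as [|n IH]; simpl; [ring|]. rewrite IH, H; ring. Qed.

Lemma rsum_scal (c : R) (f : nat -> R) (n : nat) :
  rsum (fun k => c * f k) n = c * rsum f n.
Proof. induction n as [|n IH]; simpl; [ring|]. rewrite IH; ring. Qed.

Lemma rsum_pos (f : nat -> R) (n : nat) :
  (0 < n)%nat -> (forall k, (k < n)%nat -> 0 < f k) -> 0 < rsum f n.
Proof.
  induction n as [|n IH]; simpl; intros Hn H; [lia|].
  assert (0 < f n) by (apply H; lia).
  destruct n as [|n]; [simpl; lra|].
  assert (0 < rsum f (S n)) by (apply IH; [lia|intros; apply H; lia]). lra.
Qed.

Lemma rsum_normalized (w : nat -> R) (n : nat) :
  rsum w n <> 0 -> rsum (fun k => w k / rsum w n) n = 1.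
Proof.
  intros Hw.
  rewrite (rsum_ext _ (fun k => / rsum w n * w k)) by (intro; unfold Rdiv; ring).
  rewrite rsum_scal. field. exact Hw.
Qed.

Lemma rmaxn_ge (f : nat -> R) (n k : nat) : (k < n)%nat -> f k <= rmaxn f n.
Proof.
  induction n as [|n IH]; simpl; intros Hk; [lia|].
  destruct (Nat.eq_dec k n) as [->|Hne]; [apply Rmax_r|].
  eapply Rle_trans; [apply IH; lia|apply Rmax_l].
Qed.

Lemma Rabs_sub_le_of_ratio (p q X : R) :
  0 < q -> 0 < X -> q / X <= p <= q * X -> Rabs (p - q) <= q * (X - 1).
Proof.
  intros Hq HX [Hlo Hhi].
  assert (HX1 : 1 <= X).
  { assert (q / X <= q * X) as H by lra.
    apply (Rmult_le_compat_r X) in H; [|lra].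
    replace (q / X * X) with q in H by (field; lra).
    assert (1 <= X * X) by (apply (Rmult_le_reg_l q); lra). nra. }
  assert (q - q / X <= q * (X - 1)).
  { replace (q - q / X) with (q * (X - 1) / X) by (field; lra).
    apply Rmult_le_reg_r with X; [lra|].
    replace (q * (X - 1) / X * X) with (q * (X - 1)) by (field; lra).
    assert (0 <= q * (X - 1) * (X - 1)) by (apply Rmult_le_pos; nra). lra. }
  apply Rabs_le; lra.
Qed.

Lemma normalized_ratio_bounds (u w : nat -> R) (n : nat) (lo X : R) :
  0 < lo -> 0 < X ->
  (forall k, (k < n)%nat -> 0 < w k) ->
  (forall k, (k < n)%nat -> lo * w k <= u k <= lo * X * w k) ->
  forall k, (k < n)%nat ->
    w k / rsum w n / X <= u k / rsum u n <= w k / rsum w n * X.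
Proof.
  intros Hlo HX Hw Hu k Hk.
  assert (HW : 0 < rsum w n) by (apply rsum_pos; [lia|exact Hw]).
  assert (HUlo : lo * rsum w n <= rsum u n).
  { rewrite <- rsum_scal. apply rsum_le. intros j Hj. apply Hu, Hj. }
  assert (HUhi : rsum u n <= lo * X * rsum w n).
  { rewrite <- rsum_scal. apply rsum_le. intros j Hj. apply Hu, Hj. }
  assert (HU : 0 < rsum u n) by nra.
  destruct (Hu k Hk) as [Hukl Hukh]. assert (Hwk := Hw k Hk).
  assert (Hlwk : 0 < lo * w k) by nra.
  split.
  - apply (Rle_trans _ (lo * w k / (lo * X * rsum w n))); [right; field; lra|].
    unfold Rdiv. apply Rmult_le_compat; [lra| |exact Hukl|].
    + apply Rlt_le, Rinv_0_lt_compat; nra.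
    + apply Rinv_le_contravar; lra.
  - apply (Rle_trans _ (lo * X * w k / (lo * rsum w n))); [|right; field; lra].
    unfold Rdiv. apply Rmult_le_compat; [lra| |exact Hukh|].
    + apply Rlt_le, Rinv_0_lt_compat, HU.
    + apply Rinv_le_contravar; nra.
Qed.

Lemma half_l1_le_of_pointwise (p q : nat -> R) (n : nat) (c : R) :
  rsum q n = 1 ->
  (forall k, (k < n)%nat -> Rabs (p k - q k) <= q k * c) ->
  / 2 * rsum (fun k => Rabs (p k - q k)) n <= / 2 * c.
Proof.
  intros Hq Hpq. apply Rmult_le_compat_l; [lra|].
  apply (Rle_trans _ (rsum (fun k => c * q k) n)).
  - apply rsum_le. intros k Hk. rewrite Rmult_comm. apply Hpq, Hk.
  - rewrite rsum_scal, Hq. lra.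
Qed.

Lemma exp_le_compat (x y : R) : x <= y -> exp x <= exp y.
Proof. intros [Hlt|Heq]; [left; apply exp_increasing, Hlt|right; rewrite Heq; reflexivity]. Qed.

Lemma p_q_close_of_gamma_bounds (dS : nat) (ES : nat -> R) (E : R) (s s1 s2 : R -> R)
  (a b : R) :
  (0 < dS)%nat ->
  (forall k, (k < dS)%nat -> 0 <= ES k) ->
  (forall x, derivable_pt_lim s x (s1 x)) ->
  (forall x, derivable_pt_lim s1 x (s2 x)) ->
  (forall k xi, (k < dS)%nat -> E - ES k <= xi <= E -> a <= / 2 * s2 xi * ES k ^ 2 <= b) ->
  (forall k, (k < dS)%nat ->
     Rabs (p_vec s E ES dS k - q_vec (s1 E) ES dS k)
       <= q_vec (s1 E) ES dS k * (exp (b - a) - 1)) /\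
  / 2 * rsum (fun k => Rabs (p_vec s E ES dS k - q_vec (s1 E) ES dS k)) dS
    <= / 2 * (exp (b - a) - 1).
Proof.
  intros HdS HES Hs1 Hs2 Hgamma.
  set (u := fun k => exp (s (E - ES k))).
  set (w := fun k => exp (- s1 E * ES k)).
  assert (Hw : forall k, (k < dS)%nat -> 0 < w k) by (intros; apply exp_pos).
  assert (Huw : forall k, (k < dS)%nat ->
            exp (s E + a) * w k <= u k <= exp (s E + a) * exp (b - a) * w k).
  { intros k Hk.
    destruct (taylor_lagrange2 s s1 s2 (E - ES k) E ltac:(specialize (HES k Hk); lra)
                (fun t _ => Hs1 t) (fun t _ => Hs2 t)) as [xi [Hxi Htaylor]].
    destruct (Hgamma k xi Hk Hxi) as [Ha Hb].
    unfold u, w. rewrite Htaylor, <- !exp_plus.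
    replace ((E - ES k - E) ^ 2) with (ES k ^ 2) by ring.
    split; apply exp_le_compat; lra. }
  assert (Hratio := normalized_ratio_bounds u w dS _ _ (exp_pos (s E + a)) (exp_pos (b - a)) Hw Huw).
  assert (Hpoint : forall k, (k < dS)%nat ->
            Rabs (p_vec s E ES dS k - q_vec (s1 E) ES dS k)
              <= q_vec (s1 E) ES dS k * (exp (b - a) - 1)).
  { intros k Hk. apply Rabs_sub_le_of_ratio; [|apply exp_pos|apply Hratio, Hk].
    apply Rdiv_lt_0_compat; [apply Hw, Hk|apply rsum_pos; assumption]. }
  split; [exact Hpoint|].
  apply half_l1_le_of_pointwise; [|exact Hpoint].
  apply rsum_normalized, Rgt_not_eq, rsum_pos; assumption.
Qed.

Theorem mainTheorem3
  (dS : nat) (ES : nat -> R) (E : R) (s s1 s2 : R -> R)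
  (HdS : (0 < dS)%nat)
  (HES : forall k, (k < dS)%nat -> 0 <= ES k)
  (Hs1 : forall x, derivable_pt_lim s x (s1 x))
  (Hs2 : forall x, derivable_pt_lim s1 x (s2 x)) :
  (forall gmax gmin : R,
     is_lub (gamma_set s2 E ES dS) gmax ->
     is_glb (gamma_set s2 E ES dS) gmin ->
     (forall k, (k < dS)%nat ->
        Rabs (p_vec s E ES dS k - q_vec (s1 E) ES dS k)
          <= q_vec (s1 E) ES dS k * (exp (gmax - gmin) - 1)) /\
     / 2 * rsum (fun k => Rabs (p_vec s E ES dS k - q_vec (s1 E) ES dS k)) dS
       <= / 2 * (exp (gmax - gmin) - 1)) /\
  (forall (eta : R) (m : nat) (h : R),
     0 < eta -> (1 <= m)%nat ->
     (forall xi, E - rmaxn ES dS <= xi <= E ->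
        - (4 / (eta ^ 2 * INR m)) <= s2 xi <= 0) ->
     rmaxn ES dS <= h ->
     / 2 * rsum (fun k => Rabs (p_vec s E ES dS k - q_vec (s1 E) ES dS k)) dS
       <= / 2 * (exp (2 * h ^ 2 / (eta ^ 2 * INR m)) - 1)).
Proof.
  split.
  - intros gmax gmin [Hub _] [Hlb _].
    apply (p_q_close_of_gamma_bounds dS ES E s s1 s2); try assumption.
    intros k xi Hk Hxi.
    assert (Hgamma : gamma_set s2 E ES dS (/ 2 * s2 xi * ES k ^ 2)) by (exists k, xi; auto).
    split; [apply Hlb|apply Hub]; exact Hgamma.
  - intros eta m h Heta Hm Hs2_bounds Hh.
    set (c := 4 / (eta ^ 2 * INR m)) in *.
    assert (Hm_pos : 0 < INR m) by (apply lt_0_INR; lia).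
    assert (Hc : 0 <= c)
      by (apply Rlt_le, Rdiv_lt_0_compat; [lra|apply Rmult_lt_0_compat; [apply pow_lt|]; lra]).
    replace (2 * h ^ 2 / (eta ^ 2 * INR m)) with (0 - - (c / 2 * h ^ 2))
      by (unfold c; field; lra).
    refine (proj2 (p_q_close_of_gamma_bounds dS ES E s s1 s2 _ _ HdS HES Hs1 Hs2 _)).
    intros k xi Hk Hxi.
    assert (HESk := HES k Hk). assert (Hmax := rmaxn_ge ES dS k Hk).
    destruct (Hs2_bounds xi ltac:(lra)) as [Hlo Hhi].
    assert (Hsq : ES k ^ 2 <= h ^ 2) by (apply pow_incr; lra).
    assert (0 <= ES k ^ 2) by apply pow2_ge_0.
    split; nra.
Qed.
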